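(* Let $U\subset\mathbb{R}^s$ be open, $X:U\to\mathbb{R}^{n+1}_1$ a spacelike embedding, $n^T$ a smooth future directed unit timelike normal field along $X$ and $n^S$ a smooth unit spacelike normal field along $X$ with $\langle n^S,n^T\rangle=0$. Write $\mathbb{LG}(n^T,n^S)(u)=n^T(u)+n^S(u)=(\ell_0(u),\ell_1(u),\dots,\ell_n(u))$ and $\widetilde{\mathbb{LG}}(n^T,n^S)=\mathbb{LG}(n^T,n^S)/\ell_0$. Then for each $i=1,\dots,s$, $$\pi^\tau\circ \widetilde{\mathbb{LG}}(n^T,n^S)_{u_i}=-\sum_{j=1}^s\frac{1}{\ell_0(u)}h_i^j(n^T,n^S)\,X_{u_j}.$$
   Context: $\mathbb{R}^{n+1}_1$ is $\mathbb{R}^{n+1}$ with $\langle x,y\rangle=-x_0y_0+\sum_{i=1}^n x_iy_i$. An embedding is spacelike if all its tangent spaces consist of spacelike vectors ($\langle v,v\rangle>0$). A normal vector at $p=X(u)$ is a vector in the pseudo-orthogonal complement $N_p(M)$ of $T_pM=\mathrm{span}\{X_{u_1},\dots,X_{u_s}\}$. Future directed unit timelike: $\langle n^T,n^T\rangle=-1$ and zeroth coordinate positive; unit spacelike: $\langle n^S,n^S\rangle=1$. $\pi^\tau:\mathbb{R}^{n+1}_1=T_pM\oplus N_p(M)\to T_pM$ is the projection. $g_{ij}=\langle X_{u_i},X_{u_j}\rangle$, $(g^{ij})=(g_{ij})^{-1}$, $h_{ij}(n^T,n^S)=\langle-(n^T+n^S)_{u_i},X_{u_j}\rangle$, and $h_i^j=\sum_m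 h_{im}g^{mj}$. (Note $\ell_0>0$ since $n^T+n^S$ is a nonzero lightlike vector.) *)

From HB Require Import structures.
From mathcomp Require Import all_boot all_order all_algebra.
From mathcomp Require Import all_classical all_reals all_analysis.
Set Implicit Arguments. Unset Strict Implicit. Unset Printing Implicit Defensive.
Import Order.TTheory GRing.Theory Num.Theory.
Import numFieldNormedType.Exports.
Local Open Scope ring_scope.
Local Open Scope classical_set_scope.

Section Defs.
Variable R : realType.

(* Minkowski (pseudo-)scalar product on R^{n+1}_1, vectors are 'rV_(n.+1),
   coordinate 0 is the time coordinate x_0. *)
Definition lor (n : nat) (x y : 'rV[R]_n.+1) : R :=
  - (x 0 ord0 * y 0 ord0) + \sum_(i < n) x 0 (lift ord0 i) * y 0 (lift ord0 i).

Definition pderiv (s : nat) (V : normedModType R) (f : 'rV[R]_s -> V)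
  (i : 'I_s) (u : 'rV[R]_s) : V := derive f u (delta_mx 0 i).

Fixpoint Ck (s : nat) (V : normedModType R) (k : nat) (U : set 'rV[R]_s)
  (f : 'rV[R]_s -> V) : Prop :=
  match k with
  | 0 => forall u, U u -> {for u, continuous f}
  | k'.+1 => (forall u, U u -> differentiable f u) /\
             forall i : 'I_s, Ck k' U (pderiv f i)
  end.

Definition smooth_on (s : nat) (V : normedModType R) (U : set 'rV[R]_s)
  (f : 'rV[R]_s -> V) : Prop := forall k, Ck k U f.

Definition jac (s n : nat) (X : 'rV[R]_s -> 'rV[R]_n.+1) (u : 'rV[R]_s)
  : 'M[R]_(s, n.+1) := \matrix_(i < s) pderiv X i u.

(* embedding: smooth immersion that is a homeomorphism onto its image *)
Definition embedding (s n : nat) (U : set 'rV[R]_s)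
  (X : 'rV[R]_s -> 'rV[R]_n.+1) : Prop :=
  [/\ smooth_on U X,
      (forall u, U u -> row_free (jac X u)),
      (forall u v, U u -> U v -> X u = X v -> u = v) &
      (forall u, U u -> forall e : R, 0 < e -> exists2 d : R, 0 < d &
          forall v, U v -> `|X v - X u| < d -> `|v - u| < e)].

Definition tangent (s n : nat) (X : 'rV[R]_s -> 'rV[R]_n.+1) (u : 'rV[R]_s)
  (w : 'rV[R]_n.+1) : Prop := exists c : 'rV[R]_s, w = c *m jac X u.

Definition normal (s n : nat) (X : 'rV[R]_s -> 'rV[R]_n.+1) (u : 'rV[R]_s)
  (w : 'rV[R]_n.+1) : Prop := forall i : 'I_s, lor w (pderiv X i u) = 0.

Definition spacelike_embedding (s n : nat) (U : set 'rV[R]_s)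
  (X : 'rV[R]_s -> 'rV[R]_n.+1) : Prop :=
  embedding U X /\
  forall u, U u -> forall w, tangent X u w -> w != 0 -> 0 < lor w w.

Definition pi_tau (s n : nat) (X : 'rV[R]_s -> 'rV[R]_n.+1) (u : 'rV[R]_s)
  (v : 'rV[R]_n.+1) : 'rV[R]_n.+1 :=
  xget 0 [set w | tangent X u w /\ normal X u (v - w)].

Definition gmat (s n : nat) (X : 'rV[R]_s -> 'rV[R]_n.+1) (u : 'rV[R]_s)
  : 'M[R]_s := \matrix_(i, j) lor (pderiv X i u) (pderiv X j u).

Definition hlow (s n : nat) (X nT nS : 'rV[R]_s -> 'rV[R]_n.+1)
  (u : 'rV[R]_s) (i j : 'I_s) : R :=
  lor (- pderiv (nT \+ nS) i u) (pderiv X j u).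

Definition hmix (s n : nat) (X nT nS : 'rV[R]_s -> 'rV[R]_n.+1)
  (u : 'rV[R]_s) (i j : 'I_s) : R :=
  \sum_(m < s) hlow X nT nS u i m * invmx (gmat X u) m j.

Definition LG (s n : nat) (nT nS : 'rV[R]_s -> 'rV[R]_n.+1) : 'rV[R]_s -> 'rV[R]_n.+1 :=
  fun u => nT u + nS u.
Definition ell0 (s n : nat) (nT nS : 'rV[R]_s -> 'rV[R]_n.+1) (u : 'rV[R]_s) : R :=
  LG nT nS u 0 ord0.
Definition LGt (s n : nat) (nT nS : 'rV[R]_s -> 'rV[R]_n.+1) : 'rV[R]_s -> 'rV[R]_n.+1 :=
  fun u => (ell0 nT nS u)^-1 *: LG nT nS u.

End Defs.

From HB Require Import structures.
From mathcomp Require Import all_boot all_order all_algebra.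
From mathcomp Require Import all_classical all_reals all_analysis.
From mathcomp Require Import lra.
Set Implicit Arguments. Unset Strict Implicit. Unset Printing Implicit Defensive.
Import Order.TTheory GRing.Theory Num.Theory.
Import numFieldNormedType.Exports.
Local Open Scope ring_scope.
Local Open Scope classical_set_scope.

(* Since n^T + n^S is normal, differentiating LGt = l0^-1 (n^T + n^S) by the
   product rule gives l0^-1 (n^T + n^S)_{u_i} plus a normal vector, which the
   tangential projection kills.  Because the metric is nondegenerate on the
   spacelike tangent space, the Gram matrix g is invertible and the projection
   of v is sum_j (sum_m <v, X_{u_m}> g^{mj}) X_{u_j}; for
   v = (n^T + n^S)_{u_i} the coefficients <v, X_{u_m}> are -h_{im}. *)

Section Lorentz.
Variables (R : realType) (n : nat).
Implicit Types (x y z : 'rV[R]_n.+1) (a : R).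

Lemma lorC x y : lor x y = lor y x.
Proof. by rewrite /lor mulrC; congr (_ + _); apply: eq_bigr => k _; rewrite mulrC. Qed.

Lemma lorDl x y z : lor (x + y) z = lor x z + lor y z.
Proof.
rewrite /lor !mxE mulrDl opprD -addrACA -big_split /=.
by congr (_ + _); apply: eq_bigr => k _; rewrite !mxE mulrDl.
Qed.

Lemma lorZl a x z : lor (a *: x) z = a * lor x z.
Proof.
rewrite /lor !mxE mulrDr mulrN mulrA mulr_sumr.
by congr (_ + _); apply: eq_bigr => k _; rewrite !mxE mulrA.
Qed.

Lemma lorNl x z : lor (- x) z = - lor x z.
Proof. by rewrite -scaleN1r lorZl mulN1r. Qed.

Lemma lorBl x y z : lor (x - y) z = lor x z - lor y z.
Proof. by rewrite lorDl lorNl. Qed.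

Lemma lor_suml (I : finType) (F : I -> 'rV[R]_n.+1) z :
  lor (\sum_i F i) z = \sum_i lor (F i) z.
Proof.
apply: (big_morph _ (fun x y => lorDl x y z)).
by rewrite -(scale0r (0 : 'rV[R]_n.+1)) lorZl mul0r.
Qed.

Lemma lorDr x y z : lor z (x + y) = lor z x + lor z y.
Proof. by rewrite !(lorC z) lorDl. Qed.

Lemma lor_null_time0 x : lor x x = 0 -> x 0 ord0 = 0 -> x = 0.
Proof.
rewrite /lor => + x00; rewrite x00 mulr0 oppr0 add0r => /psumr_eq0P x_eq0.
apply/rowP => j; rewrite mxE; case: (unliftP ord0 j) => [k ->|->] //.
have /(_ k isT) := x_eq0 (fun k _ => sqr_ge0 (x 0 (lift ord0 k))).
by move/eqP; rewrite mulf_eq0 orbb => /eqP.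
Qed.

Lemma lor_unit_sum_null x y :
  lor x x = -1 -> lor y y = 1 -> lor y x = 0 -> lor (x + y) (x + y) = 0.
Proof. by move=> xx yy yx; rewrite !lorDl !lorDr xx yy yx lorC yx; lra. Qed.

Lemma lor_unit_sum_neq0 x y :
  lor x x = -1 -> lor y y = 1 -> x + y != 0.
Proof.
move=> xx yy; rewrite addr_eq0; apply/eqP => Ey.
by move: xx; rewrite Ey lorNl lorC lorNl opprK yy; lra.
Qed.

Lemma lor_unit_sum_time_neq0 x y :
  lor x x = -1 -> lor y y = 1 -> lor y x = 0 -> (x + y) 0 ord0 != 0.
Proof.
move=> xx yy yx.
exact: contra_neq (lor_null_time0 (lor_unit_sum_null xx yy yx))
                  (lor_unit_sum_neq0 xx yy).
Qed.

End Lorentz.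

Lemma derive_scale_mx (R : realType) (V : normedModType R) (p q : nat)
    (f : V -> R) (F : V -> 'M[R]_(p, q)) t v :
  derivable f t v -> derivable F t v ->
  'D_v (fun y => f y *: F y) t = f t *: 'D_v F t + 'D_v f t *: F t.
Proof.
move=> df dF; have dFij := (derivable_mxP F t v).1 dF.
have fFE i j : (fun y => (f y *: F y) i j) = f * (fun y => F y i j).
  by apply/funext => y; rewrite mxE.
have dfF : derivable (fun y => f y *: F y) t v.
  by apply/derivable_mxP => i j; rewrite fFE; exact: derivableM.
rewrite !derive_mx //; apply/matrixP => i j; rewrite !mxE fFE deriveM //.
by congr (_ + _); rewrite mulrC.
Qed.

Section TangentProjection.
Variables (R : realType) (s n : nat) (X : 'rV[R]_s -> 'rV[R]_n.+1).
Variable u : 'rV[R]_s.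

Lemma mul_jacE (c : 'rV[R]_s) : c *m jac X u = \sum_j c 0 j *: pderiv X j u.
Proof. by rewrite mulmx_sum_row; apply: eq_bigr => j _; rewrite rowK. Qed.

Lemma lor_mul_jac (c : 'rV[R]_s) (k : 'I_s) :
  lor (c *m jac X u) (pderiv X k u) = (c *m gmat X u) 0 k.
Proof.
rewrite mul_jacE lor_suml !mxE; apply: eq_bigr => j _.
by rewrite lorZl mxE.
Qed.

Hypothesis tangent_spacelike :
  forall w, tangent X u w -> w != 0 -> 0 < lor w w.
Hypothesis jac_free : row_free (jac X u).

Lemma tangent_normal_eq0 w : tangent X u w -> normal X u w -> w = 0.
Proof.
move=> [c wE] wN; apply/eqP; apply: contraT => w_neq0.
have := tangent_spacelike (ex_intro _ c wE) w_neq0.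
suff -> : lor w w = 0 by rewrite ltxx.
rewrite {2}wE lorC mul_jacE lor_suml big1 // => j _.
by rewrite lorZl lorC wN mulr0.
Qed.

Lemma gmat_unit : gmat X u \in unitmx.
Proof.
rewrite -row_free_unit; apply: inj_row_free => c cg0.
apply/eqP; rewrite -(mulmx_free_eq0 _ jac_free); apply/eqP.
apply: tangent_normal_eq0; first by exists c.
by move=> k; rewrite lor_mul_jac cg0 mxE.
Qed.

Lemma pi_tau_uniq v w : tangent X u w -> normal X u (v - w) -> pi_tau X u v = w.
Proof.
move=> [c wE] vwN; apply: xget_unique; first by split; first exists c.
move=> y [[d yE] vyN]; apply/eqP; rewrite -subr_eq0; apply/eqP.
apply: tangent_normal_eq0; first by exists (d - c); rewrite mulmxBl -yE -wE.
move=> k; have -> : y - w = (v - w) - (v - y) by rewrite opprB [RHS]addrC addrA subrK.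
by rewrite lorBl vwN vyN subrr.
Qed.

Lemma pi_tauE v : pi_tau X u v =
  \sum_j (\sum_m lor v (pderiv X m u) * invmx (gmat X u) m j) *: pderiv X j u.
Proof.
set c := \row_m lor v (pderiv X m u) *m invmx (gmat X u).
have -> : \sum_j (\sum_m lor v (pderiv X m u) * invmx (gmat X u) m j)
            *: pderiv X j u = c *m jac X u.
  by rewrite mul_jacE; apply: eq_bigr => j _; rewrite !mxE;
     congr (_ *: _); apply: eq_bigr => m _; rewrite mxE.
apply: pi_tau_uniq; first by exists c.
move=> k; rewrite lorBl lor_mul_jac -mulmxA mulVmx ?gmat_unit // mulmx1.
by rewrite mxE subrr.
Qed.

End TangentProjection.

Theorem proposition3p3 (R : realType) (s n : nat) (U : set 'rV[R]_s)
  (X nT nS : 'rV[R]_s -> 'rV[R]_n.+1) :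
  open U ->
  spacelike_embedding U X ->
  smooth_on U nT -> smooth_on U nS ->
  (forall u, U u ->
     [/\ normal X u (nT u), lor (nT u) (nT u) = -1 & 0 < nT u 0 ord0] /\
     [/\ normal X u (nS u), lor (nS u) (nS u) = 1 &
         lor (nS u) (nT u) = 0]) ->
  forall u, U u -> forall i : 'I_s,
    pi_tau X u (pderiv (LGt nT nS) i u) =
    - \sum_(j < s) ((ell0 nT nS u)^-1 * hmix X nT nS u i j) *: pderiv X j u.
Proof.
move=> _ [[_ jac_free _ _] tangent_spacelike] nT_smooth nS_smooth frame u Uu i.
have [[nTN nTT _] [nSN nSS nST]] := frame u Uu.
have dL : derivable (LG nT nS) u (delta_mx 0 i).
  by apply: derivableD; apply: diff_derivable; [exact: (nT_smooth 1%N).1|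
                                              exact: (nS_smooth 1%N).1].
have dl0V : derivable (fun y => (ell0 nT nS y)^-1) u (delta_mx 0 i).
  exact: derivableV (lor_unit_sum_time_neq0 nTT nSS nST)
                    ((derivable_mxP _ _ _).1 dL 0 ord0).
have LN : normal X u (LG nT nS u) by move=> k; rewrite lorDl nTN nSN addr0.
rewrite /pderiv /LGt derive_scale_mx // (pi_tauE (tangent_spacelike u Uu) (jac_free u Uu)).
rewrite -sumrN; apply: eq_bigr => j _; rewrite -scaleNr /hmix mulr_sumr -sumrN.
congr (_ *: _); apply: eq_bigr => m _.
rewrite lorDl !lorZl LN mulr0 addr0 /hlow lorNl /LG.
by rewrite mulNr mulrN opprK mulrA.
Qed.
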